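(* For every triple of partitions $\lambda=(\lambda^{(1)},\lambda^{(2)},\lambda^{(3)})\vdash_n d$ one has $k(\lambda)\le N(\lambda)$.
   Context: $\lambda\vdash_n d$ means each $\lambda^{(k)}$ is a partition of $d$ with at most $n$ nonzero parts. The Kronecker coefficient $k(\lambda)$ is the dimension of the space of $S_d$-invariants in $[\lambda^{(1)}]\otimes[\lambda^{(2)}]\otimes[\lambda^{(3)}]$, where $[\mu]$ is the irreducible (Specht) representation of the symmetric group $S_d$ indexed by $\mu$; equivalently it is the dimension of the space of highest weight vectors of weight $\lambda^*$ in $\mathrm{Sym}^d\bigotimes^3(\mathbb C^n)^*$. An obstruction design is a subset $\mathcal H\subseteq[\ell_1]\times[\ell_2]\times[\ell_3]$; its $k$-slices are the nonempty sets $\{x\in\mathcal H:x_k=i\}$, and its type is $(\lambda^{(1)},\lambda^{(2)},\lambda^{(3)})$ where $\lambda^{(k)}$ is the transpose of the partition obtained by sorting the $k$-slice sizes nonincreasingly. Let $\ell_k=\lambda^{(k)}_1$. $N(\lambda)$ is the number of orbits, under the natural action of $S_{\ell_1}\times S_{\ell_2}\times S_{\ell_3}$ permuting coordinates in each direction, of the set of obstruction designs $\mathcal H\subseteq[\ell_1]\times[\ell_2]\times[\ell_3]$ of type $\lambda$. *)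

From HB Require Import structures.
From mathcomp Require Import all_boot all_order all_algebra all_fingroup all_field.
Set Implicit Arguments. Unset Strict Implicit. Unset Printing Implicit Defensive.
Import GRing.Theory.

Definition is_part_of (n d : nat) (la : seq nat) : bool :=
  [&& sorted geq la, all (fun x => 0 < x) la, sumn la == d & size la <= n].

Definition conj_part (la : seq nat) : seq nat :=
  [seq count (fun x => j < x) la | j <- iota 0 (head 0 la)].

Definition cells (la : seq nat) : seq (nat * nat) :=
  flatten [seq [seq (i, j) | j <- iota 0 (nth 0 la i)] | i <- iota 0 (size la)].
Definition rowb (la : seq nat) (b : nat) : nat := (nth (0, 0) (cells la) b).1.
Definition colb (la : seq nat) (b : nat) : nat := (nth (0, 0) (cells la) b).2.

(* A tabloid of content in [d] : a function from entries to row indices. *)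
Definition tabloid (d : nat) := {ffun 'I_d -> 'I_d.+1}.

(* A Young tableau of shape la (|la| = d) is a bijection p : cells -> entries,
   cells being numbered 0..d-1 in row-reading order; its tabloid {t}. *)
Definition tabloid_of (la : seq nat) (d : nat) (p : 'S_d) : tabloid d :=
  [ffun x => inord (rowb la (p^-1 x)%g)].

Local Open Scope ring_scope.
(* the permutation module M^la is spanned by tabloids; we work in the space
   of all functions tabloid d -> C *)
Definition Mspace (d : nat) := {ffun tabloid d -> algC^o}.

Definition delta_tab (d : nat) (T : tabloid d) : Mspace d :=
  [ffun T' => ((T' == T)%:R)%R].

(* polytabloid e_t = sum_{pi in column stabilizer} sgn(pi) {pi t};
   q ranges over permutations of cells preserving columns; the tableau
   "t composed with q" is (q * p)%g (which maps cell b to p (q b)). *)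
Definition polytabloid (la : seq nat) (d : nat) (p : 'S_d) : Mspace d :=
  \sum_(q : 'S_d | [forall b : 'I_d, colb la (q b) == colb la b])
     ((-1) ^+ odd_perm q) *: delta_tab (tabloid_of la (mulg q p)).

(* triple tensor products, realised as functions on triples of tabloids *)
Definition Wspace (d : nat) := {ffun (tabloid d * tabloid d * tabloid d) -> algC^o}.

Definition tens3 (d : nat) (f1 f2 f3 : Mspace d) : Wspace d :=
  [ffun T => (f1 T.1.1 * f2 T.1.2 * f3 T.2)%R].

Local Close Scope ring_scope.
Definition specht3 (la1 la2 la3 : seq nat) (d : nat) : {vspace Wspace d} :=
  <<flatten [seq [seq tens3 (polytabloid la1 p1) (polytabloid la2 p2) (polytabloid la3 p3)
     | p2 <- enum [set: 'S_d], p3 <- enum [set: 'S_d]] | p1 <- enum [set: 'S_d]]>>%VS.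

Definition act_tab (d : nat) (s : 'S_d) (T : tabloid d) : tabloid d :=
  [ffun x => T (s^-1 x)%g].
Definition act_W (d : nat) (s : 'S_d) (F : Wspace d) : Wspace d :=
  [ffun T => F (act_tab s^-1 T.1.1, act_tab s^-1 T.1.2, act_tab s^-1 T.2)%g].

Definition kronecker (la1 la2 la3 : seq nat) : nat :=
  let d := sumn la1 in
  \dim (specht3 la1 la2 la3 d :&:
        \bigcap_(s : 'S_d) fixedSpace (linfun (act_W s)))%VS.

Definition design (l1 l2 l3 : nat) := {set 'I_l1 * 'I_l2 * 'I_l3}.

Definition coord (l1 l2 l3 : nat) (k : nat) (x : 'I_l1 * 'I_l2 * 'I_l3) : nat :=
  if k == 1 then val x.1.1 else if k == 2 then val x.1.2 else val x.2.

Definition slice_sizes (l1 l2 l3 : nat) (H : design l1 l2 l3) (k : nat) : seq nat :=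
  [seq m <- [seq #|[set x in H | coord k x == i]|
             | i <- iota 0 (maxn l1 (maxn l2 l3))] | 0 < m].

Definition design_type (l1 l2 l3 : nat) (H : design l1 l2 l3) (k : nat) : seq nat :=
  conj_part (sort geq (slice_sizes H k)).

Definition has_type (l1 l2 l3 : nat) (H : design l1 l2 l3)
  (la1 la2 la3 : seq nat) : bool :=
  [&& design_type H 1 == la1, design_type H 2 == la2 & design_type H 3 == la3].

Definition act_design (l1 l2 l3 : nat) (p1 : 'S_l1) (p2 : 'S_l2) (p3 : 'S_l3)
  (H : design l1 l2 l3) : design l1 l2 l3 :=
  [set (p1 x.1.1, p2 x.1.2, p3 x.2) | x in H].

Definition num_orbits (la1 la2 la3 : seq nat) : nat :=
  let l1 := head 0 la1 in let l2 := head 0 la2 in let l3 := head 0 la3 in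
  let D := [set H : design l1 l2 l3 | has_type H la1 la2 la3] in
  #|[set [set H' in D | [exists p1 : 'S_l1, exists p2 : 'S_l2, exists p3 : 'S_l3,
                           H' == act_design p1 p2 p3 H]] | H in D]|.

From Pilot Require Import Defs.
From HB Require Import structures.
From mathcomp Require Import all_boot all_order all_algebra all_fingroup all_field.
From mathcomp Require Import zify ring.
Set Implicit Arguments. Unset Strict Implicit. Unset Printing Implicit Defensive.
Import GRing.Theory.

(* Let V be the S_d-invariants of S^la1 (x) S^la2 (x) S^la3.
   Symmetrising over S_d ([avg]) is d! times the identity on V, so V is spanned
   by the vectors avg(X_t), X_t = e_t1 (x) e_t2 (x) e_t3, t a triple of
   tableaux.  Send each entry to the triple of its columns in t1, t2, t3.  If
   this column pattern is not injective, a transposition of two entries sharing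
   all three columns negates X_t but fixes avg(X_t), so avg(X_t) = 0.  If it is
   injective, its image is a design of type la, and when the designs of t and
   t' lie in one S_l1 x S_l2 x S_l3-orbit, each t'_k arises from t_k by
   relabelling entries, permuting cells within rows and within columns, so
   avg(X_t') is a multiple of avg(X_t).  Hence one vector per orbit spans V. *)

Definition row_cells (la : seq nat) (i : nat) : seq (nat * nat) :=
  [seq (i, j) | j <- iota 0 (nth 0 la i)].

Lemma cellsE la : cells la = flatten [seq row_cells la i | i <- iota 0 (size la)].
Proof. by []. Qed.

Lemma mem_cells la i j : ((i, j) \in cells la) = (i < size la) && (j < nth 0 la i).
Proof.
rewrite cellsE; apply/flatten_mapP/andP => [[i']|[hi hj]].
  rewrite mem_iota add0n => /andP[_ hi'] /mapP[j' hj' [-> ->]].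
  by move: hj'; rewrite mem_iota add0n => /andP[_ ->].
exists i; first by rewrite mem_iota add0n.
by apply/mapP; exists j => //; rewrite mem_iota add0n.
Qed.

Lemma uniq_cells la : uniq (cells la).
Proof.
rewrite cellsE; elim: (iota 0 (size la)) (iota_uniq 0 (size la)) => [|i s IH] //=.
case/andP=> his us; rewrite cat_uniq IH // andbT.
rewrite map_inj_uniq ?iota_uniq //=; last by move=> x y [].
apply/hasPn => c /flatten_mapP[i' hi' /mapP[j _ ->]].
by apply/mapP => -[j' _ [ei _]]; rewrite -ei hi' in his.
Qed.

Lemma size_cells la : size (cells la) = sumn la.
Proof.
rewrite cellsE size_flatten /shape -map_comp.
rewrite (eq_map (fun i => size_map _ _)) /= (eq_map (fun i => size_iota _ _)) /=.
by rewrite -/(mkseq _ _) mkseq_nth.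
Qed.

Lemma count_cells_col la j :
  count (fun c : nat * nat => c.2 == j) (cells la) = count (fun r => j < r) la.
Proof.
rewrite cellsE count_flatten -map_comp.
have -> : [seq count (fun c : nat * nat => c.2 == j) (row_cells la i)
           | i <- iota 0 (size la)] =
          [seq nat_of_bool (j < nth 0 la i) | i <- iota 0 (size la)].
  apply: eq_map => i /=; rewrite count_map /= (eq_count (a2 := pred1 j)) //.
  by rewrite count_uniq_mem ?iota_uniq // mem_iota add0n.
by rewrite sumn_count -[in RHS](mkseq_nth 0 la) /mkseq count_map.
Qed.

Lemma geq_trans : transitive (geq : rel nat).
Proof. exact: rev_trans leq_trans. Qed.

Lemma sorted_geq_head x l y : sorted geq (x :: l) -> y \in l -> y <= x.
Proof. by move=> /(order_path_min geq_trans) /allP h /h. Qed.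

Lemma nth_le_head la a : sorted geq la -> nth 0 la a <= head 0 la.
Proof.
case: la => [|x l] /= hs; first by rewrite nth_nil.
case: a => [|a] //=; case: (ltnP a (size l)) => ha.
  exact: (sorted_geq_head hs (mem_nth 0 ha)).
by rewrite nth_default.
Qed.

Lemma count_gt_nth la a j : sorted geq la ->
  (a < count (fun r => j < r) la) = (j < nth 0 la a).
Proof.
elim: la a => [|x l IH] a /=; first by rewrite nth_nil.
move=> hs; have hl : sorted geq l by apply: (path_sorted hs).
have hle := sorted_geq_head hs.
case: (ltnP j x) => hjx.
  by case: a => [|a] //=; rewrite add1n ltnS; apply: IH.
have -> : count (fun r => j < r) l = 0.
  apply/eqP; rewrite -leqn0 leqNgt -has_count; apply/hasPn => y /hle hy.
  by rewrite -leqNgt (leq_trans hy hjx).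
case: a => [|a] /=; first by rewrite [RHS]ltnNge hjx.
case: (ltnP a (size l)) => ha; last by rewrite nth_default.
by rewrite [RHS]ltnNge (leq_trans (hle _ (mem_nth 0 ha)) hjx).
Qed.

Lemma count_lt_iota m h : count (fun j => j < m) (iota 0 h) = minn m h.
Proof.
elim: h => [|h IH]; first by rewrite minn0.
by rewrite -addn1 iotaD count_cat IH /= add0n addn0; case: (ltnP h m) => hm /=; lia.
Qed.

Lemma conj_sorted la : sorted geq (conj_part la).
Proof.
rewrite /conj_part sorted_map; apply: sub_sorted (iota_sorted 0 _) => i j hij /=.
by apply: sub_count => r /= h; apply: leq_ltn_trans hij h.
Qed.

Lemma conj_partK la : sorted geq la -> all (fun x => 0 < x) la ->
  conj_part (conj_part la) = la.
Proof.
move=> hs hp; case E: la => [|x l] //; rewrite -E.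
have hh : head 0 (conj_part la) = size la.
  have : 0 < head 0 la by move: hp; rewrite E /= => /andP[].
  rewrite /conj_part; case: (head 0 la) => [|h] //= _.
  by rewrite -count_predT; apply: eq_in_count => y /= /(allP hp).
rewrite {1}/conj_part hh -[RHS](mkseq_nth 0 la) /mkseq; apply: eq_map => a /=.
rewrite /conj_part count_map /= (eq_count (a2 := fun j => j < nth 0 la a)).
  by rewrite count_lt_iota; apply/minn_idPl; apply: nth_le_head.
by move=> j /=; apply: count_gt_nth.
Qed.

Lemma filter_col_lengths la M : sorted geq la -> head 0 la <= M ->
  [seq m <- [seq count (fun r => i < r) la | i <- iota 0 M] | 0 < m] = conj_part la.
Proof.
move=> hs hM; rewrite -(subnKC hM) iotaD map_cat filter_cat add0n.
rewrite [X in _ ++ X](eq_in_filter (a2 := pred0)) ?filter_pred0 ?cats0; last first.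
  move=> m /mapP[i]; rewrite mem_iota => /andP[hi _] -> /=.
  rewrite -has_count; apply/negbTE/hasPn => r hr; rewrite -leqNgt.
  have := nth_le_head (index r la) hs; rewrite nth_index // => hr'.
  exact: leq_trans hr' hi.
apply/all_filterP/allP => m /mapP[i]; rewrite mem_iota add0n => /andP[_ hi] ->.
by rewrite count_gt_nth // nth0 (leq_trans _ (nth_le_head 0 hs)).
Qed.

Lemma card_ord_nth (T : eqType) (s : seq T) x0 d (P : pred T) : size s = d ->
  #|[set b : 'I_d | P (nth x0 s b)]| = count P s.
Proof.
move=> <-; rewrite cardsE -sum1_card.
rewrite (eq_bigl (fun b : 'I_(size s) => P (nth x0 s b))) //.
rewrite -(big_mkord (fun i => P (nth x0 s i)) (fun _ => 1)) sum1_count.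
by rewrite /index_iota subn0 -[in RHS](mkseq_nth x0 s) /mkseq count_map.
Qed.

Lemma card_set_perm (T : finType) (p : {perm T}) (Q : pred T) :
  #|[set x | Q (p^-1 x)%g]| = #|[set x | Q x]|.
Proof.
rewrite -[RHS](card_imset _ (@perm_inj _ p)); apply: eq_card => x; rewrite !inE.
apply/idP/imsetP => [h|[b]]; first by exists (p^-1 x)%g; rewrite ?inE ?permKV.
by rewrite inE => hb ->; rewrite permK.
Qed.

Section CellsOfPartition.
Variables (n d : nat) (la : seq nat).
Hypothesis hp : is_part_of n d la.

Lemma part_sorted : sorted geq la. Proof. by case/and4P: hp. Qed.
Lemma part_pos : all (fun x => 0 < x) la. Proof. by case/and4P: hp. Qed.
Lemma size_part_cells : size (cells la) = d.
Proof. by case/and4P: hp => _ _ /eqP <- _; rewrite size_cells. Qed.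

Lemma cell_mem (b : 'I_d) : (rowb la b, colb la b) \in cells la.
Proof. by rewrite /rowb /colb -surjective_pairing mem_nth // size_part_cells. Qed.

Lemma colb_lt (b : 'I_d) : colb la b < head 0 la.
Proof.
have := cell_mem b; rewrite mem_cells => /andP[_ h].
exact: leq_trans h (nth_le_head _ part_sorted).
Qed.

Definition col_ord (b : 'I_d) : 'I_(head 0 la) := Ordinal (colb_lt b).

Lemma cell_inj (b b' : 'I_d) : rowb la b = rowb la b' -> colb la b = colb la b' -> b = b'.
Proof.
rewrite /rowb /colb => hr hc; apply/val_inj/eqP.
rewrite -(nth_uniq (0, 0) _ _ (uniq_cells la)) ?size_part_cells ?ltn_ord //.
by rewrite [nth _ _ b]surjective_pairing [nth _ _ b']surjective_pairing hr hc.
Qed.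

Lemma cell_exists i j : (i, j) \in cells la ->
  exists b : 'I_d, rowb la b = i /\ colb la b = j.
Proof.
move=> hm; have hb : index (i, j) (cells la) < d by rewrite -size_part_cells index_mem.
by exists (Ordinal hb); rewrite /rowb /colb /= nth_index.
Qed.

Lemma card_col (p : 'S_d) j :
  #|[set x | colb la (p^-1 x)%g == j]| = count (fun r => j < r) la.
Proof.
rewrite (card_set_perm p (fun b => colb la b == j)) -count_cells_col.
exact: (card_ord_nth (0, 0) (fun c : nat * nat => c.2 == j) size_part_cells).
Qed.

End CellsOfPartition.

Lemma design_type_eq n d la l1 l2 l3 (H : design l1 l2 l3) k :
  is_part_of n d la -> head 0 la <= maxn l1 (maxn l2 l3) ->
  (forall i, #|[set x in H | Defs.coord k x == i]| = count (fun r => i < r) la) ->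
  design_type H k = la.
Proof.
move=> hp hM hc; rewrite /design_type /slice_sizes.
rewrite (eq_map hc) filter_col_lengths ?(part_sorted hp) //.
by rewrite (sorted_sort geq_trans (conj_sorted la)) conj_partK ?(part_sorted hp) ?(part_pos hp).
Qed.

Lemma card_slice_img (T U : finType) (g : T -> U) (P : pred U) : injective g ->
  #|[set y in [set g x | x in T] | P y]| = #|[set x | P (g x)]|.
Proof.
move=> gi; rewrite -[RHS](card_imset _ gi); apply: eq_card => y; rewrite !inE.
apply/andP/imsetP => [[/imsetP[x _ ->] h]|[x]]; first by exists x; rewrite ?inE.
by rewrite inE => h ->; split => //; apply: imset_f.
Qed.

Lemma perm_of_imset (T U : finType) (g g' : T -> U) : injective g' ->
  [set g' x | x in T] = [set g x | x in T] -> exists u : {perm T}, forall x, g' x = g (u x).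
Proof.
move=> g'inj E; have hex x : exists y, g' x == g y.
  have : g' x \in [set g y | y in T] by rewrite -E imset_f.
  by case/imsetP => y _ ->; exists y.
pose u x := xchoose (hex x); have hu x : g' x = g (u x) by apply/eqP/(xchooseP (hex x)).
have uinj : injective u by move=> x y e; apply: g'inj; rewrite !hu e.
by exists (perm uinj) => x; rewrite permE.
Qed.

Lemma act_design1 l1 l2 l3 (H : design l1 l2 l3) : act_design 1%g 1%g 1%g H = H.
Proof. by rewrite -[RHS]imset_id; apply: eq_imset => -[[a b] c]; rewrite !perm1. Qed.

Lemma act_designV l1 l2 l3 (p1 : 'S_l1) (p2 : 'S_l2) (p3 : 'S_l3) H :
  act_design p1^-1 p2^-1 p3^-1 (act_design p1 p2 p3 H) = H.
Proof.
rewrite /act_design -imset_comp -[RHS]imset_id; apply: eq_imset => -[[a b] c].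
by rewrite /= !permK.
Qed.

Local Open Scope ring_scope.

Definition sgnp d (q : 'S_d) : algC := (-1) ^+ odd_perm q.

Definition col_preserving (la : seq nat) (d : nat) (q : 'S_d) : bool :=
  [forall b : 'I_d, colb la (q b) == colb la b].
Definition row_preserving (la : seq nat) (d : nat) (q : 'S_d) : bool :=
  [forall b : 'I_d, rowb la (q b) == rowb la b].
Definition col_respecting (la : seq nat) (d : nat) (q : 'S_d) : Prop :=
  forall x y : 'I_d, (colb la (q x) == colb la (q y)) = (colb la x == colb la y).

Section CellPermutations.
Variables (la : seq nat) (d : nat).
Implicit Types p q c r : 'S_d.

Lemma col_preservingP q : reflect (forall b, colb la (q b) = colb la b) (col_preserving la q).
Proof. by apply: (iffP forallP) => h b; apply/eqP. Qed.

Lemma row_preservingP q : reflect (forall b, rowb la (q b) = rowb la b) (row_preserving la q).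
Proof. by apply: (iffP forallP) => h b; apply/eqP. Qed.

Lemma col_preservingM q1 q2 : col_preserving la q1 -> col_preserving la q2 ->
  col_preserving la (q1 * q2)%g.
Proof.
move=> /col_preservingP h1 /col_preservingP h2.
by apply/col_preservingP=> b; rewrite permM h2 h1.
Qed.

Lemma col_preservingV q : col_preserving la q -> col_preserving la q^-1%g.
Proof. by move=> /col_preservingP h; apply/col_preservingP=> b; rewrite -{2}(permKV q b) h. Qed.

Lemma row_preservingV q : row_preserving la q -> row_preserving la q^-1%g.
Proof. by move=> /row_preservingP h; apply/row_preservingP=> b; rewrite -{2}(permKV q b) h. Qed.

Lemma col_respectingV q : col_respecting la q -> col_respecting la q^-1%g.
Proof. by move=> h x y; rewrite -h !permKV. Qed.

Lemma tabloid_of_row r p : row_preserving la r -> tabloid_of la (r * p)%g = tabloid_of la p.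
Proof.
move=> /row_preservingP h; apply/ffunP=> x; rewrite !ffunE invMg permM.
by rewrite -{2}(permKV r (p^-1 x)%g) h.
Qed.

Lemma polytabloid_col c p : col_preserving la c ->
  polytabloid la (c * p)%g = sgnp c *: polytabloid la p.
Proof.
move=> hc; rewrite /polytabloid scaler_sumr (reindex_inj (mulIg c^-1%g)) /=.
apply: eq_big => [q|q _].
  apply/idP/idP => h; last by apply: col_preservingM => //; apply: col_preservingV.
  by rewrite -(mulgKV c q); apply: col_preservingM => //; apply: col_preservingV.
rewrite -mulgA mulKg /sgnp odd_permM odd_permV signr_addb scalerA.
by rewrite [_ * (-1) ^+ c]mulrC.
Qed.

(* A permutation of cells preserving rows and mapping columns to columns
   normalises the column group, hence fixes the polytabloid. *)
Lemma polytabloid_row r p : row_preserving la r -> col_respecting la r ->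
  polytabloid la (r * p)%g = polytabloid la p.
Proof.
move=> hr hc; rewrite /polytabloid.
rewrite (reindex_inj (h := fun q => (r * q * r^-1)%g)); last by move=> q1 q2 /= /mulIg /mulgI.
apply: eq_big => [q|q _] /=.
  apply/forallP/forallP => h b.
    by have := h (r^-1%g b); rewrite !permM permKV -(hc (r^-1 %g _) (r^-1 %g b)) !permKV.
  by rewrite !permM -(hc (r^-1 %g _) b) !permKV; apply: h.
rewrite -!mulgA mulKg (tabloid_of_row (q * p)%g hr).
by rewrite !odd_permM odd_permV addbC -addbA addbb addbF.
Qed.

Lemma polytabloid_tperm p x y : x != y -> colb la (p^-1 x)%g = colb la (p^-1 y)%g ->
  polytabloid la (p * tperm x y)%g = - polytabloid la p.
Proof.
move=> nxy hxy; have hc : col_preserving la (p * tperm x y * p^-1)%g.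
  apply/col_preservingP => b; rewrite !permM.
  case: (tpermP x y (p b)) => [hb|hb|_ _]; last by rewrite permK.
    by rewrite -hxy -hb permK.
  by rewrite hxy -hb permK.
rewrite -[(p * _)%g](mulgKV p) polytabloid_col //.
rewrite /sgnp !odd_permM odd_permV odd_tperm nxy.
by case: (odd_perm p); rewrite /= scaleN1r.
Qed.

Lemma polytabloid_act p s (U : tabloid d) :
  polytabloid la (p * s)%g U = polytabloid la p (act_tab s^-1%g U).
Proof.
rewrite /polytabloid !sum_ffunE; apply: eq_bigr => q _; rewrite !ffunE mulgA.
have -> : tabloid_of la (q * p * s)%g = act_tab s (tabloid_of la (q * p)%g).
  by apply/ffunP=> z; rewrite !ffunE invMg permM.
have actK (t : 'S_d) : cancel (act_tab t) (act_tab t^-1%g).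
  by move=> T; apply/ffunP=> z; rewrite !ffunE invgK permK.
congr (_ *: (nat_of_bool _)%:R); rewrite -[LHS](inj_eq (can_inj (actK s^-1%g))).
by rewrite actK.
Qed.

End CellPermutations.

Section Relabelling.
Variables (n d : nat) (la : seq nat).
Hypothesis hp : is_part_of n d la.

Lemma row_perm_of_col_perm (pi : 'S_(head 0 la)) :
  (forall j, count (fun r => pi j < r)%N la = count (fun r => j < r)%N la) ->
  exists r : 'S_d, [/\ row_preserving la r, col_respecting la r &
    forall b, colb la (r b) = pi (col_ord hp b)].
Proof.
move=> hcnt; have hex (b : 'I_d) : exists b' : 'I_d,
    (rowb la b' == rowb la b) && (colb la b' == pi (col_ord hp b)).
  have := cell_mem hp b; rewrite !mem_cells => /andP[hr hc].
  have : (rowb la b, val (pi (col_ord hp b))) \in cells la.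
    rewrite mem_cells hr /= -(count_gt_nth _ _ (part_sorted hp)) hcnt.
    by rewrite count_gt_nth ?(part_sorted hp).
  by case/(cell_exists hp) => b' [e1 e2]; exists b'; rewrite e1 e2 !eqxx.
pose f b := xchoose (hex b).
have hf b : rowb la (f b) = rowb la b /\ colb la (f b) = pi (col_ord hp b).
  by have /andP[/eqP ? /eqP ?] := xchooseP (hex b).
have finj : injective f.
  move=> b1 b2 e; have [r1 c1] := hf b1; have [r2 c2] := hf b2.
  apply: (cell_inj hp); first by rewrite -r1 -r2 e.
  have /perm_inj : pi (col_ord hp b1) = pi (col_ord hp b2).
    by apply: val_inj; rewrite /= -c1 -c2 e.
  by move/(congr1 val).
exists (perm finj); split=> [||b]; rewrite ?permE.
- by apply/row_preservingP => b; rewrite permE (hf b).1.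
- move=> x y; rewrite !permE (hf x).2 (hf y).2.
  apply/eqP/eqP => [/val_inj/perm_inj/(congr1 val) //|e].
  by congr (val (pi _)); apply: val_inj.
- exact: (hf b).2.
Qed.

Definition col_of (p : 'S_d) (x : 'I_d) : 'I_(head 0 la) := col_ord hp (p^-1 x)%g.

(* If tableau p' has the column pattern of p, up to relabelling entries by u
   and permuting columns by pi, then e_{p'} is proportional to e_{p u^-1}:
   indeed p' = c * r^-1 * (p u^-1), with r the row-preserving permutation
   inducing pi and c in the column group. *)
Lemma polytabloid_relabel (p p' u : 'S_d) (pi : 'S_(head 0 la)) :
  (forall x, col_of p' x = pi (col_of p (u x))) ->
  exists e : algC, polytabloid la p' = e *: polytabloid la (p * u^-1)%g.
Proof.
move=> hu; have hpu x : ((p * u^-1)^-1 x = p^-1 (u x))%g by rewrite invMg invgK permM.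
have hcnt j : count (fun r => pi j < r)%N la = count (fun r => j < r)%N la.
  rewrite -(card_col hp p' (pi j)) -(card_col hp (p * u^-1)%g j).
  apply: eq_card => x; rewrite !inE hpu.
  by rewrite -[colb _ _]/(val (col_of p' x)) hu (inj_eq val_inj) (inj_eq perm_inj).
have [r [rr rc hr]] := row_perm_of_col_perm hcnt.
set w := (r^-1 * (p * u^-1))%g.
have hc : col_preserving la (p' * w^-1)%g.
  apply/col_preservingP => b; rewrite invMg invgK !permM hpu hr.
  by rewrite -[col_ord _ _]/(col_of p (u (p' b))) -hu /col_of /= permK.
exists (sgnp (p' * w^-1)%g).
rewrite -[in LHS](mulgKV w p') (polytabloid_col (c := (p' * w^-1)%g)) // /w.
by rewrite (@polytabloid_row la d r^-1 (p * u^-1)) ?row_preservingV //; apply: col_respectingV.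
Qed.

End Relabelling.

Lemma tens3E d (f1 f2 f3 : Mspace d) T : tens3 f1 f2 f3 T = f1 T.1.1 * f2 T.1.2 * f3 T.2.
Proof. by rewrite ffunE. Qed.

Lemma tens3Z d (a b c : algC) (f g h : Mspace d) :
  tens3 (a *: f) (b *: g) (c *: h) = (a * b * c) *: tens3 f g h.
Proof. by apply/ffunP=> T; rewrite [RHS]ffunE !tens3E !ffunE /GRing.scale /=; ring. Qed.

Lemma act_WE d (s : 'S_d) (F : Wspace d) T :
  act_W s F T = F (act_tab s^-1 T.1.1, act_tab s^-1 T.1.2, act_tab s^-1 T.2)%g.
Proof. by rewrite ffunE. Qed.

Lemma act_WM d (s s' : 'S_d) F : act_W s (act_W s' F) = act_W (s' * s)%g F.
Proof.
have act_tabM (a b : 'S_d) T : act_tab a (act_tab b T) = act_tab (b * a)%g T.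
  by apply/ffunP=> x; rewrite !ffunE invMg permM.
by apply/ffunP=> T; rewrite !act_WE !act_tabM -!invMg.
Qed.

Lemma act_W_linear d (s : 'S_d) : linear (act_W s).
Proof. by move=> a F G; apply/ffunP=> T; rewrite !(act_WE, ffunE). Qed.

HB.instance Definition _ d (s : 'S_d) :=
  GRing.isLinear.Build algC (Wspace d) (Wspace d) _ (act_W s) (act_W_linear s).

Definition avg d (F : Wspace d) : Wspace d := \sum_(s : 'S_d) act_W s F.

Lemma avg_linear d : linear (@avg d).
Proof.
move=> a F G; rewrite /avg scaler_sumr -big_split /=; apply: eq_bigr => s _.
by rewrite linearP.
Qed.

HB.instance Definition _ d :=
  GRing.isLinear.Build algC (Wspace d) (Wspace d) _ (@avg d) (@avg_linear d).

Lemma avg_act d (s : 'S_d) F : avg (act_W s F) = avg F.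
Proof.
rewrite /avg [RHS](reindex_inj (mulgI s)) /=; apply: eq_bigr => s' _.
by rewrite act_WM.
Qed.

Lemma avg_invariant d (F : Wspace d) :
  (forall s, act_W s F = F) -> F = (#|'S_d|%:R)^-1 *: avg F.
Proof.
move=> hfix; have -> : avg F = #|'S_d|%:R *: F.
  by rewrite /avg (eq_bigr (fun _ => F)) ?sumr_const ?scaler_nat // => s _; rewrite hfix.
rewrite scalerA mulVf ?scale1r // Num.Theory.pnatr_eq0 -lt0n.
by apply/card_gt0P; exists 1%g.
Qed.

Definition trip d := ('S_d * 'S_d * 'S_d)%type.

Definition Xt la1 la2 la3 d (t : trip d) : Wspace d :=
  tens3 (polytabloid la1 t.1.1) (polytabloid la2 t.1.2) (polytabloid la3 t.2).

Definition tmul d (t : trip d) (s : 'S_d) : trip d := (t.1.1 * s, t.1.2 * s, t.2 * s)%g.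

Section TripleTensors.
Variables (la1 la2 la3 : seq nat) (d : nat).
Implicit Type t : trip d.
Local Notation Xt := (Xt la1 la2 la3).

Lemma act_Xt t s : act_W s (Xt t) = Xt (tmul t s).
Proof.
case: t => [[p1 p2] p3]; apply/ffunP=> T.
rewrite act_WE [LHS]tens3E [RHS]tens3E; cbn [fst snd tmul].
by rewrite 3![in RHS]polytabloid_act.
Qed.

Lemma avg_tmul t s : avg (Xt (tmul t s)) = avg (Xt t).
Proof. by rewrite -act_Xt avg_act. Qed.

Lemma invariants_in_span_avg :
  (specht3 la1 la2 la3 d :&: \bigcap_(s : 'S_d) fixedSpace (linfun (act_W s))
   <= <<[seq avg (Xt t) | t <- enum [set: trip d]]>>)%VS.
Proof.
apply/subvP => F /memv_capP[hS hI].
have hfix s : act_W s F = F.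
  have : F \in fixedSpace (linfun (act_W s)).
    by move: hI; apply/subvP; apply: (bigcapv_inf s).
  by move/fixedSpaceP; rewrite lfunE.
rewrite (avg_invariant hfix) memvZ //.
have := memv_img (linfun (@avg d)) hS.
rewrite limg_span lfunE (eq_map (lfunE (@avg d))); apply/subvP/span_subvP.
move=> _ /mapP[_ /flatten_mapP[q1 _ /flatten_mapP[q2 _ /mapP[q3 _ ->]]] ->].
by apply: memv_span; apply/mapP; exists (q1, q2, q3); rewrite ?mem_enum ?inE.
Qed.

(* If two distinct entries share a column in each of the three tableaux, the
   transposition exchanging them negates X_t but fixes its symmetrisation,
   which therefore vanishes. *)
Lemma avg_same_columns t x y : x != y ->
  colb la1 (t.1.1^-1 x)%g = colb la1 (t.1.1^-1 y)%g ->
  colb la2 (t.1.2^-1 x)%g = colb la2 (t.1.2^-1 y)%g ->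
  colb la3 (t.2^-1 x)%g = colb la3 (t.2^-1 y)%g ->
  avg (Xt t) = 0.
Proof.
move=> nxy h1 h2 h3.
have E : Xt (tmul t (tperm x y)) = - Xt t.
  rewrite /Xt /tmul; cbn [fst snd]; rewrite !polytabloid_tperm // -!scaleN1r tens3Z.
  by rewrite mulrNN !mul1r.
have := avg_tmul t (tperm x y); rewrite E linearN => h.
have /eqP : avg (Xt t) *+ 2 = 0 by rewrite mulr2n -{1}h addNr.
by rewrite -scaler_nat scaler_eq0 Num.Theory.pnatr_eq0 => /eqP.
Qed.

End TripleTensors.

Section DesignOfTableaux.
Variables (n d : nat) (la1 la2 la3 : seq nat).
Local Notation l1 := (head 0 la1).
Local Notation l2 := (head 0 la2).
Local Notation l3 := (head 0 la3).
Local Notation Xt := (Xt la1 la2 la3).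

Definition typed_designs : {set design l1 l2 l3} := [set H | has_type H la1 la2 la3].

Definition orbit_of (H : design l1 l2 l3) : {set design l1 l2 l3} :=
  [set H' in typed_designs | [exists p1 : 'S_l1, exists p2 : 'S_l2, exists p3 : 'S_l3,
                                H' == act_design p1 p2 p3 H]].

Definition design_orbits : {set {set design l1 l2 l3}} :=
  [set orbit_of H | H in typed_designs].

Lemma num_orbitsE : num_orbits la1 la2 la3 = #|design_orbits|.
Proof. by []. Qed.

Hypotheses (hp1 : is_part_of n d la1) (hp2 : is_part_of n d la2) (hp3 : is_part_of n d la3).

Definition col_pattern (t : trip d) (x : 'I_d) : 'I_l1 * 'I_l2 * 'I_l3 :=
  (col_of hp1 t.1.1 x, col_of hp2 t.1.2 x, col_of hp3 t.2 x).

Definition design_of (t : trip d) : design l1 l2 l3 := [set col_pattern t x | x in 'I_d].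

(* When the column pattern is injective, the k-slices of the design are the
   columns of the k-th tableau, so the design has type (la1, la2, la3). *)
Lemma design_of_type t : injective (col_pattern t) -> has_type (design_of t) la1 la2 la3.
Proof.
move=> gi; have slices la (hp : is_part_of n d la) (p : 'S_d) k :
    (forall x, Defs.coord k (col_pattern t x) = colb la (p^-1 x)%g) ->
    forall i, #|[set y in design_of t | Defs.coord k y == i]| = count (fun r => i < r)%N la.
  move=> hk i; rewrite card_slice_img // -(card_col hp p i).
  by apply: eq_card => x; rewrite !inE hk.
apply/and3P; split; apply/eqP.
- by apply: (design_type_eq hp1); rewrite ?leq_maxl //; apply: (slices _ hp1 t.1.1).
- apply: (design_type_eq hp2); first by rewrite leq_max leq_maxl orbT.
  exact: (slices _ hp2 t.1.2).
- apply: (design_type_eq hp3); first by rewrite leq_max leq_maxr orbT.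
  exact: (slices _ hp3 t.2).
Qed.

Lemma avg_not_injective t : ~ injective (col_pattern t) -> avg (Xt t) = 0.
Proof.
move/injectiveP/injectivePn => [x [y nxy exy]].
apply: (avg_same_columns nxy).
- exact: (congr1 (fun z => val z.1.1) exy).
- exact: (congr1 (fun z => val z.1.2) exy).
- exact: (congr1 (fun z => val z.2) exy).
Qed.

Lemma avg_same_orbit (t t' : trip d) (p1 : 'S_l1) (p2 : 'S_l2) (p3 : 'S_l3) :
  injective (col_pattern t') -> design_of t' = act_design p1 p2 p3 (design_of t) ->
  exists c : algC, avg (Xt t') = c *: avg (Xt t).
Proof.
pose act_pt (z : 'I_l1 * 'I_l2 * 'I_l3) := (p1 z.1.1, p2 z.1.2, p3 z.2).
move=> inj' E; have [u hu] : exists u : 'S_d, forall x,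
    col_pattern t' x = act_pt (col_pattern t (u x)).
  apply: (perm_of_imset (g := act_pt \o col_pattern t)) inj' _.
  by move: E; rewrite /act_design -imset_comp; apply.
have [e1 E1] := polytabloid_relabel (fun x => congr1 (fun z => z.1.1) (hu x)).
have [e2 E2] := polytabloid_relabel (fun x => congr1 (fun z => z.1.2) (hu x)).
have [e3 E3] := polytabloid_relabel (fun x => congr1 (fun z => z.2) (hu x)).
exists (e1 * e2 * e3); rewrite /Xt E1 E2 E3 tens3Z linearZ /=.
by congr (_ *: _); apply: (avg_tmul la1 la2 la3 t u^-1%g).
Qed.

(* The symmetrised tensor of some triple of tableaux whose design lies in the
   orbit Ob (zero if there is none). *)
Definition orbit_vec (Ob : {set design l1 l2 l3}) : Wspace d :=
  if [pick t : trip d | design_of t \in Ob] is Some t then avg (Xt t) else 0.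

Lemma avg_in_orbit_span :
  (<<[seq avg (Xt t) | t <- enum [set: trip d]]>>
   <= <<[seq orbit_vec Ob | Ob <- enum design_orbits]>>)%VS.
Proof.
apply/span_subvP => _ /mapP[t _ ->].
case: (injectiveP (col_pattern t)) => [gi|/avg_not_injective ->]; last exact: mem0v.
have Hin : design_of t \in orbit_of (design_of t).
  rewrite inE inE design_of_type //=; apply/existsP; exists 1%g.
  by apply/existsP; exists 1%g; apply/existsP; exists 1%g; rewrite act_design1.
have : orbit_vec (orbit_of (design_of t)) \in
       <<[seq orbit_vec Ob | Ob <- enum design_orbits]>>%VS.
  by apply/memv_span/map_f; rewrite mem_enum imset_f // inE design_of_type.
rewrite /orbit_vec; case: pickP => [t0|/(_ t)]; last by rewrite Hin.
rewrite inE => /andP[_ /existsP[q1 /existsP[q2 /existsP[q3 /eqP E]]]].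
have E' : design_of t = act_design q1^-1 q2^-1 q3^-1 (design_of t0) by rewrite E act_designV.
by have [c ->] := avg_same_orbit gi E'; apply: memvZ.
Qed.

End DesignOfTableaux.

Local Close Scope ring_scope.

Theorem mainTheorem8 (n d : nat) (la1 la2 la3 : seq nat) :
  is_part_of n d la1 -> is_part_of n d la2 -> is_part_of n d la3 ->
  kronecker la1 la2 la3 <= num_orbits la1 la2 la3.
Proof.
move=> hp1 hp2 hp3; have hd : sumn la1 = d by case/and4P: hp1 => _ _ /eqP.
rewrite /kronecker /= hd num_orbitsE.
have sub_span := subv_trans (invariants_in_span_avg la1 la2 la3 d) (avg_in_orbit_span hp1 hp2 hp3).
apply: leq_trans (dimvS sub_span) _.
by rewrite (leq_trans (dim_span _)) // size_map -cardE.
Qed.
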